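(* For any $k \ge 1$, the total number of binary words (of any length, including the empty word) that avoid $0^i1^{k-i}$ for all $i \in \{0,1,\dots,k\}$ is $C_{k+1} - 1$; equivalently $\sum_{m=0}^{2k-2} B(k,m) = C_{k+1}-1$, where $C_n=\frac{1}{n+1}\binom{2n}{n}$.
   Context: A binary word avoids a word $u$ if $u$ does not occur in it as a (not necessarily contiguous) subsequence. For $k\ge1$, $m \ge 0$, $B(k,m)$ is the number of such avoiding binary words of length $m$ (it is $0$ for $m \ge 2k-1$). *)

From mathcomp Require Import all_boot.
Set Implicit Arguments. Unset Strict Implicit. Unset Printing Implicit Defensive.

(* Binary words: letters 0 = false, 1 = true.  Occurrence as a
   (not necessarily contiguous) subsequence is MathComp's [subseq]. *)
Definition avoids (u w : seq bool) : bool := ~~ subseq u w.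

Definition pat (k i : nat) : seq bool := nseq i false ++ nseq (k - i) true.

Definition avoids_all (k : nat) (w : seq bool) : bool :=
  all (fun i => avoids (pat k i) w) (iota 0 k.+1).

Definition B (k m : nat) : nat := #|[set w : m.-tuple bool | avoids_all k w]|.

Definition catalan (n : nat) : nat := 'C(n.*2, n) %/ n.+1.

From mathcomp Require Import all_boot zify.
Set Implicit Arguments. Unset Strict Implicit. Unset Printing Implicit Defensive.

(* Reverse the words, so that the patterns become 1^(k-i) 0^i, and classify
   them by their number z of zeros.  A word starting with 1 avoids the
   patterns of level k+1 iff its tail avoids those of level k, and a word
   starting with 0 does iff its tail does and has fewer than k zeros.  Hence
   the number Dz k z of avoiding words with z zeros (of any length) satisfies
   Dz (k+1) z = [z = 0] + Dz k z + Dz (k+1) (z-1); these are the ballot numbers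
   C(k+z+1, z+1) - C(k+z+1, z).  Summing over z < k gives Dz (k+1) k - 1, and
   Dz (k+1) k = C(2k+2, k+1) - C(2k+2, k) is the Catalan number C_(k+1). *)

Fixpoint bool_words (m : nat) : seq (seq bool) :=
  if m is m'.+1 then
    [seq true :: t | t <- bool_words m'] ++ [seq false :: t | t <- bool_words m']
  else [:: [::]].

Lemma mem_bool_words m s : (s \in bool_words m) = (size s == m).
Proof.
elim: m s => [|m IH] [|b s] //=; rewrite mem_cat.
  by apply/negbTE/negP; case/orP => /mapP[].
rewrite eqSS -IH; apply/orP/idP => [[]/mapP[t t_in [_ ->]] //|s_in].
by case: b; [left | right]; apply: map_f.
Qed.

Lemma uniq_bool_words m : uniq (bool_words m).
Proof.
elim: m => [|m IH] //=.
rewrite cat_uniq !map_inj_uniq ?IH //; try by move=> x y [].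
by rewrite andbT; apply/hasPn => _ /mapP[t _ ->]; apply/negP => /mapP[].
Qed.

Lemma card_bool_tuples m (P : pred (seq bool)) :
  #|[set w : m.-tuple bool | P w]| = count P (bool_words m).
Proof.
rewrite cardsE cardE /enum_mem size_filter.
transitivity (count P (map val (Finite.enum (m.-tuple bool)))).
  by rewrite count_map.
apply/permP/uniq_perm; rewrite ?uniq_bool_words //.
  by rewrite map_inj_uniq -?enumT ?enum_uniq //; apply: val_inj.
move=> s; rewrite mem_bool_words.
apply/mapP/idP => [[t _ ->]|s_m]; first by rewrite size_tuple.
by exists (Tuple s_m); rewrite -?enumT ?mem_enum.
Qed.

Lemma count_partition_nat (T : Type) (a : pred T) (f : T -> nat) K s :
  (forall x, a x -> f x < K) ->
  count a s = \sum_(0 <= z < K) count (fun x => a x && (f x == z)) s.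
Proof.
move=> fK; elim: s => [|x s IH] /=; first by rewrite big1.
rewrite big_split /= -IH; congr (_ + _).
case ax: (a x) => /=; last by rewrite big1.
rewrite (eq_bigr (fun z => (z == f x) : nat)) => [|z _]; last by rewrite eq_sym.
by rewrite -big_mkcond /= big_nat1_eq /= fK.
Qed.

Lemma count_predI_const (T : Type) (b : bool) (a : pred T) s :
  count (fun x => b && a x) s = b * count a s.
Proof. by case: b; rewrite ?mul1n ?mul0n //; elim: s. Qed.

Lemma subseq_nseq (T : eqType) (x : T) i s :
  subseq (nseq i x) s = (i <= count_mem x s).
Proof.
elim: s i => [|y s IH] [|i] //=.
by rewrite eq_sym; case: eqVneq => _; rewrite -?IH.
Qed.

Definition ravoids_all (k : nat) (t : seq bool) : bool :=
  all (fun i => avoids (rev (pat k i)) t) (iota 0 k.+1).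

Lemma avoids_all_rev k w : avoids_all k w = ravoids_all k (rev w).
Proof. by apply: eq_all => i; rewrite /avoids subseq_rev. Qed.

Lemma ravoids_allE k t : ravoids_all k t =
  all (fun i => ~~ subseq (nseq (k - i) true ++ nseq i false) t) (iota 0 k.+1).
Proof. by apply: eq_all => i; rewrite /avoids /pat rev_cat !rev_nseq. Qed.

Lemma ravoids_all_split k t : ravoids_all k t =
  all (fun i => ~~ subseq (nseq (k - i) true ++ nseq i false) t) (iota 0 k)
  && (count_mem false t < k).
Proof.
by rewrite ravoids_allE -addn1 iotaD all_cat /= andbT subnn subseq_nseq ltnNge.
Qed.

Lemma ravoids_all_bound k t : ravoids_all k t ->
  (count_mem false t < k) && (count_mem true t < k).
Proof.
move=> avt; move: (avt); rewrite ravoids_all_split => /andP[_ ->] /=.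
move: avt; rewrite ravoids_allE => /allP/(_ 0).
by rewrite mem_iota subn0 cats0 subseq_nseq -ltnNge => /(_ isT).
Qed.

Lemma ravoids_all0 t : ravoids_all 0 t = false.
Proof. by rewrite ravoids_allE /= sub0seq. Qed.

Lemma ravoids_all_nil k : ravoids_all k [::] = (0 < k).
Proof.
case: k => [|k]; first exact: ravoids_all0.
rewrite ravoids_allE; apply/allP => i; rewrite mem_iota => /andP[_ ik] /=.
by rewrite -size_eq0 size_cat !size_nseq subnK.
Qed.

Lemma ravoids_all_cons1 k t : ravoids_all k.+1 (true :: t) = ravoids_all k t.
Proof.
rewrite ravoids_all_split ravoids_allE.
rewrite (eq_in_all (a2 := fun i => ~~ subseq (nseq (k - i) true ++ nseq i false) t));
  last by move=> i; rewrite mem_iota => /= ik; rewrite subSn.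
rewrite -ravoids_allE /= add0n.
case avt: (ravoids_all k t) => //=.
by have /andP[/ltnW] := ravoids_all_bound avt.
Qed.

Lemma ravoids_all_cons0 k t :
  ravoids_all k.+1 (false :: t) = ravoids_all k.+1 t && (count_mem false t < k).
Proof.
rewrite !ravoids_all_split.
rewrite (eq_in_all (a2 := fun i => ~~ subseq (nseq (k.+1 - i) true ++ nseq i false) t));
  last by move=> i; rewrite mem_iota => /= ik; rewrite subSn.
rewrite [count_mem _ (_ :: _)]/= add1n ltnS -andbA.
by case: (ltnP (count_mem false t) k) => zk; rewrite ?andbF // ltnS (ltnW zk).
Qed.

Definition Bz (k m z : nat) : nat :=
  count (fun t => ravoids_all k t && (count_mem false t == z)) (bool_words m).

Lemma B_sum_Bz k m : B k m = \sum_(0 <= z < k) Bz k m z.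
Proof.
rewrite /B card_bool_tuples.
have -> : count (avoids_all k) (bool_words m) = count (ravoids_all k) (bool_words m).
  rewrite (eq_count (avoids_all_rev k)) -count_map.
  apply/permP/uniq_perm; rewrite ?map_inj_uniq ?uniq_bool_words //;
    try exact: (can_inj revK).
  by move=> s; rewrite -{1}(revK s) (mem_map (can_inj revK)) !mem_bool_words size_rev.
by apply: count_partition_nat => t /ravoids_all_bound /andP[].
Qed.

Lemma Bz_nil k z : Bz k 0 z = (0 < k) && (z == 0).
Proof. by rewrite /Bz /= ravoids_all_nil addn0 eq_sym. Qed.

Lemma BzS k m z : Bz k.+1 m.+1 z =
  Bz k m z + (if z is z'.+1 then (z' < k) * Bz k.+1 m z' else 0).
Proof.
rewrite /Bz /= count_cat !count_map; congr (_ + _).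
  by apply: eq_count => t /=; rewrite ravoids_all_cons1.
case: z => [|z].
  by rewrite (@eq_count _ _ pred0) ?count_pred0 // => t /=; rewrite add1n andbF.
have tailE t : ravoids_all k.+1 (false :: t) && (count_mem false (false :: t) == z.+1)
             = (z < k) && (ravoids_all k.+1 t && (count_mem false t == z)).
  rewrite ravoids_all_cons0 -[count_mem false (false :: t)]/(count_mem false t).+1.
  by rewrite eqSS; case: eqVneq => [->|]; rewrite ?andbF // !andbT andbC.
by rewrite (eq_count tailE) count_predI_const.
Qed.

Lemma count_mem_bool (t : seq bool) : count_mem true t + count_mem false t = size t.
Proof. by rewrite -(count_predC (pred1 true)); congr (_ + _); apply: eq_count => -[]. Qed.

Lemma Bz_eq0 k m z : (z + k <= m) || (k <= z) -> Bz k m z = 0.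
Proof.
move=> mz; rewrite /Bz (@eq_in_count _ _ pred0) ?count_pred0 // => t.
rewrite mem_bool_words => /eqP tm /=; apply/negbTE/andP => -[/ravoids_all_bound].
have := count_mem_bool t; rewrite tm => tsum /andP[zk ok] /eqP tz.
by move: mz; rewrite -tz -tsum addnC leq_add2r leqNgt ok leqNgt zk.
Qed.

Definition Dz (k z : nat) : nat := \sum_(0 <= m < z + k) Bz k m z.

Lemma DzS k z : z < k.+1 ->
  Dz k.+1 z = (z == 0) + Dz k z + (if z is z'.+1 then Dz k.+1 z' else 0).
Proof.
move=> zk; rewrite /Dz addnS big_nat_recl // Bz_nil -addnA; congr (_ + _).
under eq_bigr do rewrite BzS.
rewrite big_split /=; congr (_ + _).
case: z zk => [|z] zk; first by rewrite big1.
by rewrite addSnnS; apply: eq_bigr => m _; rewrite ltnS in zk; rewrite zk mul1n.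
Qed.

Lemma Dz_eq0 k z : k <= z -> Dz k z = 0.
Proof. by move=> kz; rewrite /Dz big1 // => m _; rewrite Bz_eq0 // kz orbT. Qed.

Lemma Dz0 k : Dz k 0 = k.
Proof.
elim: k => [|k IH]; first exact: Dz_eq0.
by rewrite DzS // IH addn0.
Qed.

Lemma Dz_ballot n z : z < n -> Dz n z + 'C(n + z.+1, z) = 'C(n + z.+1, z.+1).
Proof.
elim: n z => [|n IHn] z // zn.
elim: z zn => [|z IHz] zn; first by rewrite Dz0 bin0 bin1 addn1.
have Dn : Dz n z.+1 + 'C(n + z.+2, z.+1) = 'C(n + z.+2, z.+2).
  have [zn'|nz] := ltnP z.+1 n; first exact: IHn.
  have -> : n = z.+1 by apply/eqP; rewrite eqn_leq nz -ltnS zn.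
  by rewrite Dz_eq0 // add0n -[RHS]bin_sub ?addnK // leq_addl.
have Dn1 := IHz (ltnW zn); rewrite addSnnS in Dn1.
rewrite !addnS in Dn Dn1 *.
by rewrite DzS // binS [RHS]binS addSn /=; lia.
Qed.

Lemma Dz_partial_sum k z : z <= k -> Dz k.+1 z = 1 + \sum_(0 <= y < z.+1) Dz k y.
Proof.
elim: z => [|z IH] zk; first by rewrite DzS // big_nat1 addn0.
by rewrite DzS // IH 1?ltnW // [X in _ = 1 + X]big_nat_recr //=; lia.
Qed.

Lemma Dz_catalan k : Dz k.+1 k = catalan k.+1.
Proof.
have ballot := Dz_ballot (ltnSn k); rewrite addnn in ballot.
have binl := mul_bin_left k.+1.*2 k; rewrite -ballot in binl.
have Dk : Dz k.+1 k * k.+2 = 'C(k.+1.*2, k.+1) by nia.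
by rewrite /catalan -Dk mulnK.
Qed.

Lemma sum_B_Dz k : 0 < k ->
  \sum_(0 <= m < (2 * k - 2).+1) B k m = \sum_(0 <= z < k) Dz k z.
Proof.
move=> k0; under eq_bigr do rewrite B_sum_Bz.
rewrite exchange_big /=; apply: eq_big_nat => z /andP[_ zk].
rewrite /Dz (big_cat_nat (n := z + k)) //=; last by lia.
rewrite [X in _ + X = _]big_nat_cond [X in _ + X = _]big1 ?addn0 // => m /andP[/andP[zkm _] _].
by rewrite Bz_eq0 // zkm.
Qed.

Theorem corollary3p7 (k : nat) (hk : 1 <= k) :
  \sum_(0 <= m < (2 * k - 2).+1) B k m = catalan k.+1 - 1.
Proof.
rewrite sum_B_Dz // -Dz_catalan Dz_partial_sum // big_nat_recr //= Dz_eq0 //.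
by rewrite addn0 add1n subn1.
Qed.
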